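(* Let $k\ge 2$, let $\boldsymbol\mu\in\mathbb{R}^k$ and let $\boldsymbol\Sigma$ be a symmetric positive definite $k\times k$ matrix. Let $n\ge2$, let $\alpha_1,\dots,\alpha_n>0$ be pairwise distinct, $\beta_1,\dots,\beta_n>0$ with $\sum_i\beta_i=1$, and $\phi_1,\dots,\phi_n>0$. Set $\boldsymbol\beta=(\beta_1,\dots,\beta_n)'$, $\mathbf{A}_0=\mathrm{diag}(\alpha_1,\dots,\alpha_n)$, $\boldsymbol\Phi=\mathrm{diag}(\phi_1,\dots,\phi_n)$, $\mathbf{B}=\mathrm{diag}(\beta_1,\dots,\beta_n)$, $\bar\phi=\sum_i\beta_i\phi_i$, $$\mathbf{A}=(\mathbf{A}_0+\boldsymbol\Phi)\mathbf{B}+(\bar\phi\mathbf{I}_n-2\boldsymbol\Phi)\boldsymbol\beta\boldsymbol\beta',\qquad \mathbf{A}_\phi=(\mathbf{A}+\mathbf{A}')/2,$$ and $\mathbf{Q}=\boldsymbol\Sigma^{-1}-\dfrac{\boldsymbol\Sigma^{-1}\mathbf{1}\mathbf{1}'\boldsymbol\Sigma^{-1}}{\mathbf{1}'\boldsymbol\Sigma^{-1}\mathbf{1}}$, where $\mathbf{1}\in\mathbb{R}^k$ and $\mathbf{1}_n\in\mathbb{R}^n$ are vectors of ones. Consider the problem of maximizing, over $k\times n$ real matrices $\mathbf{W}$, $$EU^*(\mathbf{W})=\boldsymbol\beta'\mathbf{W}'\boldsymbol\mu-\frac12\operatorname{tr}(\mathbf{A}\mathbf{W}'\boldsymbol\Sigma\mathbf{W})\quad\text{subject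 to}\quad \mathbf{W}'\mathbf{1}=\mathbf{1}_n.$$ Then $\mathbf{A}_\phi$ is symmetric and positive definite, and the optimal solution is $$\mathcal{W}^*=\frac{\boldsymbol\Sigma^{-1}\mathbf{1}}{\mathbf{1}'\boldsymbol\Sigma^{-1}\mathbf{1}}\mathbf{1}_n'+\mathbf{Q}\boldsymbol\mu\,(\boldsymbol\beta'\mathbf{A}_\phi^{-1}).$$
   Context: Here $\boldsymbol\mu$ and $\boldsymbol\Sigma$ are the mean vector and covariance matrix of the returns of $k$ risky assets; column $i$ of $\mathbf{W}$ is the portfolio weight vector of investor $i$ (risk aversion $\alpha_i$, wealth share $\beta_i$, mimicking coefficient $\phi_i$), and $EU^*$ is the aggregate (wealth-weighted) mean-variance objective of the investors, each penalizing the $\boldsymbol\Sigma$-weighted squared deviation of his portfolio from the aggregate portfolio $\mathbf{W}\boldsymbol\beta$. *)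

From HB Require Import structures.
From mathcomp Require Import all_boot all_order all_algebra.
Set Implicit Arguments. Unset Strict Implicit. Unset Printing Implicit Defensive.
Import Order.TTheory GRing.Theory Num.Theory.
Local Open Scope ring_scope.

Section Defs.
Variable R : realFieldType.

Definition sym_posdef (m : nat) (M : 'M[R]_m) : Prop :=
  M^T = M /\ forall x : 'cV[R]_m, x != 0 -> 0 < (x^T *m M *m x) ord0 ord0.

Definition ones (m : nat) : 'cV[R]_m := const_mx 1.

Variables (n : nat) (alpha beta phi : 'I_n -> R).

Definition betav : 'cV[R]_n := \col_i beta i.
Definition A0mx : 'M[R]_n := diag_mx (\row_i alpha i).
Definition Phimx : 'M[R]_n := diag_mx (\row_i phi i).
Definition Bmx : 'M[R]_n := diag_mx (\row_i beta i).
Definition phibar : R := \sum_i beta i * phi i.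

Definition Amx : 'M[R]_n :=
  (A0mx + Phimx) *m Bmx + (phibar%:M - 2%:R *: Phimx) *m (betav *m betav^T).

Definition Aphi : 'M[R]_n := 2%:R^-1 *: (Amx + Amx^T).

Variables (k : nat) (mu : 'cV[R]_k) (Sigma : 'M[R]_k).

Definition oSio : R := ((ones k)^T *m invmx Sigma *m ones k) ord0 ord0.

Definition Qmx : 'M[R]_k :=
  invmx Sigma - oSio^-1 *: (invmx Sigma *m ones k *m (ones k)^T *m invmx Sigma).

Definition EU (W : 'M[R]_(k, n)) : R :=
  (betav^T *m W^T *m mu) ord0 ord0 - 2%:R^-1 * \tr (Amx *m W^T *m Sigma *m W).

Definition feasible (W : 'M[R]_(k, n)) : Prop := W^T *m ones k = ones n.

Definition Wstar : 'M[R]_(k, n) :=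
  oSio^-1 *: (invmx Sigma *m ones k) *m (ones n)^T
  + Qmx *m mu *m (betav^T *m invmx Aphi).

End Defs.

(* Write P = I - 1_n b'.  Then A = diag(alpha_i beta_i) + P' diag(phi_i beta_i) P
   + (b p' - p b') with p_i = phi_i beta_i, and the skew last term does not
   contribute to tr(A G) for symmetric G.  Hence tr(A D' Sigma D) > 0 for every
   D <> 0: taking D = x' shows that A_phi is positive definite, and in general
   this makes EU strictly concave.  Wstar is feasible (Q 1 = 0) and satisfies the
   Lagrange condition Sigma Wstar A_phi = mu b' + 1 lambda', so for feasible W
   the first-order term of EU at Wstar vanishes along D = W - Wstar (whose
   columns sum to 0), leaving EU W = EU Wstar - tr(A D' Sigma D) / 2. *)

From HB Require Import structures.
From mathcomp Require Import all_boot all_order all_algebra ring lra.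
Set Implicit Arguments. Unset Strict Implicit. Unset Printing Implicit Defensive.
Import Order.TTheory GRing.Theory Num.Theory.
Local Open Scope ring_scope.

Section PosDef.
Variable R : realFieldType.

Lemma posdef_qf_ge0 m (S : 'M[R]_m) (x : 'cV_m) :
  sym_posdef S -> 0 <= (x^T *m S *m x) 0 0.
Proof.
case=> _ S_pos; have [->|x_nz] := eqVneq x 0; last exact/ltW/S_pos.
by rewrite trmx0 !mul0mx mxE.
Qed.

Lemma posdef_unitmx m (S : 'M[R]_m) : sym_posdef S -> S \in unitmx.
Proof.
case=> _ S_pos; rewrite -row_free_unit -kermx_eq0; apply/eqP/row_matrixP => i.
rewrite row0; set u := row i (kermx S).
have uS : u *m S = 0 by rewrite /u -row_mul mulmx_ker row0.
apply/eqP/negPn/negP => u_nz.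
have uT_nz : u^T != 0 by rewrite -(inj_eq (@trmx_inj _ _ _)) trmxK trmx0.
by move: (S_pos _ uT_nz); rewrite trmxK uS mul0mx mxE ltxx.
Qed.

Lemma sym_posdef1 m : sym_posdef (1%:M : 'M[R]_m).
Proof.
split=> [|x x_nz]; first exact: trmx1.
have [i xi_nz] : exists i, x i 0 != 0.
  apply/existsP; apply: contraR x_nz => /existsPn x0.
  by apply/eqP/matrixP => i j; rewrite ord1 mxE; apply/eqP/negbNE/x0.
rewrite mulmx1 mxE (bigD1 i) //= ltr_pwDl ?sumr_ge0 // => [|j _];
  by rewrite !mxE -expr2 ?exprn_even_gt0 ?sqr_ge0.
Qed.

Lemma gram_mx_diag m n (S : 'M[R]_m) (E : 'M[R]_(m, n)) i :
  (E^T *m S *m E) i i = ((col i E)^T *m S *m col i E) 0 0.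
Proof.
rewrite !mxE; apply: eq_bigr => j _; rewrite !mxE; congr (_ * _).
by apply: eq_bigr => l _; rewrite !mxE.
Qed.

Lemma mxtrace_diag_gram m n (S : 'M[R]_m) (E : 'M[R]_(m, n)) (w : 'I_n -> R) :
  \tr (diag_mx (\row_i w i) *m (E^T *m S *m E)) =
  \sum_i w i * ((col i E)^T *m S *m col i E) 0 0.
Proof.
by rewrite mul_diag_mx; apply: eq_bigr => i _; rewrite mxE -gram_mx_diag mxE.
Qed.

Lemma mxtrace_diag_gram_ge0 m n (S : 'M[R]_m) (E : 'M[R]_(m, n)) (w : 'I_n -> R) :
  sym_posdef S -> (forall i, 0 <= w i) ->
  0 <= \tr (diag_mx (\row_i w i) *m (E^T *m S *m E)).
Proof.
move=> S_pd w_ge0; rewrite mxtrace_diag_gram; apply: sumr_ge0 => i _.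
by rewrite mulr_ge0 ?posdef_qf_ge0.
Qed.

Lemma mxtrace_diag_gram_gt0 m n (S : 'M[R]_m) (E : 'M[R]_(m, n)) (w : 'I_n -> R) :
  sym_posdef S -> (forall i, 0 < w i) -> E != 0 ->
  0 < \tr (diag_mx (\row_i w i) *m (E^T *m S *m E)).
Proof.
move=> S_pd w_gt0 E_nz.
have [i Ei_nz] : exists i, col i E != 0.
  apply/existsP; apply: contraR E_nz => /existsPn E0.
  apply/eqP/matrixP => a j; move/negbNE/eqP/matrixP/(_ a 0): (E0 j).
  by rewrite !mxE.
rewrite mxtrace_diag_gram (bigD1 i) //= ltr_pwDl ?mulr_gt0 ?S_pd.2 //.
by apply: sumr_ge0 => j _; rewrite mulr_ge0 ?posdef_qf_ge0 ?ltW.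
Qed.

End PosDef.

Section TraceSymmetric.
Variables (R : comNzRingType) (n : nat).
Implicit Types M G : 'M[R]_n.

Lemma mxtrace_trmx_mul_sym M G : G^T = G -> \tr (M^T *m G) = \tr (M *m G).
Proof. by move=> GT; rewrite -mxtrace_tr trmx_mul trmxK GT mxtrace_mulC. Qed.

Lemma mxtrace_skew_mul_sym M G : G^T = G -> \tr ((M - M^T) *m G) = 0.
Proof. by move=> GT; rewrite mulmxBl linearB /= mxtrace_trmx_mul_sym ?subrr. Qed.

End TraceSymmetric.

Lemma mxtrace_sympart_mul_sym (R : numFieldType) n (M G : 'M[R]_n) :
  G^T = G -> \tr ((2%:R^-1 *: (M + M^T)) *m G) = \tr (M *m G).
Proof.
move=> GT; rewrite -scalemxAl mxtraceZ mulmxDl mxtraceD mxtrace_trmx_mul_sym //.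
by rewrite -mulr2n -(mulr_natl (\tr _)) mulKf ?pnatr_eq0.
Qed.

Lemma outer_mxE (R : pzSemiRingType) m p (u : 'cV[R]_m) (v : 'cV[R]_p) :
  u *m v^T = \matrix_(i, j) (u i 0 * v j 0).
Proof. by apply/matrixP => i j; rewrite !mxE big_ord1 !mxE. Qed.

Section RiskAversionMatrix.
Variables (R : realFieldType) (n : nat) (alpha beta phi : 'I_n -> R).

Let b := betav beta.
Let o := ones R n.
Let pb : 'cV[R]_n := \col_i (phi i * beta i).
Let AB : 'M[R]_n := diag_mx (\row_i (alpha i * beta i)).
Let PB : 'M[R]_n := diag_mx (\row_i (phi i * beta i)).
Let P : 'M[R]_n := 1%:M - o *m b^T.

Lemma Amx_outerE : Amx alpha beta phi =
  AB + PB + phibar beta phi *: (b *m b^T) - 2%:R *: (pb *m b^T).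
Proof.
rewrite /Amx mulmxA !mulmxBl mul_scalar_mx -!scalemxAl.
have -> : Phimx phi *m b = pb by apply/matrixP => i j; rewrite mul_diag_mx !mxE.
rewrite /A0mx /Phimx /Bmx mulmxDl !mulmx_diag !outer_mxE.
by apply/matrixP => i j; rewrite !mxE; case: eqP => _; rewrite ?mulr1n ?mulr0n; ring.
Qed.

(* Expanding [P^T PB P] gives [PB - b pb^T - pb b^T + phibar b b^T], using
   [o^T PB o = phibar]; this absorbs the [Phimx] terms of [Amx] up to a skew part. *)
Lemma Amx_decomposition :
  Amx alpha beta phi = AB + P^T *m PB *m P + (b *m pb^T - (b *m pb^T)^T).
Proof.
have oPB : o^T *m PB = pb^T by apply/matrixP => i j; rewrite mul_mx_diag !mxE mul1r.
have PBo : PB *m o = pb by apply/matrixP => i j; rewrite mul_diag_mx !mxE mulr1.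
have pbo : pb^T *m o = (phibar beta phi)%:M.
  apply/matrixP => i j; rewrite !ord1 !mxE; apply: eq_bigr => l _; rewrite !mxE; ring.
rewrite Amx_outerE /P [(1%:M - _)^T]linearB /= trmx1 trmx_mul trmxK.
rewrite !mulmxBl !mulmxBr !mul1mx !mulmx1 (mulmxA PB) PBo -(mulmxA b) oPB.
rewrite -(mulmxA b pb^T) (mulmxA pb^T) pbo mul_scalar_mx -scalemxAr.
rewrite trmx_mul trmxK !outer_mxE.
by apply/matrixP => i j; rewrite !mxE; case: eqP => _; rewrite ?mulr1n ?mulr0n; ring.
Qed.

Hypotheses (alpha_gt0 : forall i, 0 < alpha i) (beta_gt0 : forall i, 0 < beta i)
  (phi_gt0 : forall i, 0 < phi i).

(* The skew part of [Amx] is invisible to the symmetric [D^T S D]. *)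
Lemma Amx_mxtrace_gram_gt0 m (S : 'M[R]_m) (D : 'M[R]_(m, n)) :
  sym_posdef S -> D != 0 -> 0 < \tr (Amx alpha beta phi *m (D^T *m S *m D)).
Proof.
move=> S_pd D_nz; set G := D^T *m S *m D.
have GT : G^T = G by rewrite !trmx_mul trmxK S_pd.1 mulmxA.
rewrite Amx_decomposition mulmxDl mxtraceD mxtrace_skew_mul_sym // addr0 mulmxDl mxtraceD.
have -> : \tr (P^T *m PB *m P *m G) =
          \tr (PB *m ((D *m P^T)^T *m S *m (D *m P^T))).
  by rewrite -!mulmxA mxtrace_mulC trmx_mul trmxK !mulmxA.
apply: ltr_wpDr; first by apply: mxtrace_diag_gram_ge0 => // i; rewrite ltW ?mulr_gt0.
by apply: mxtrace_diag_gram_gt0 => // i; rewrite mulr_gt0.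
Qed.

Lemma Aphi_sym_posdef : sym_posdef (Aphi alpha beta phi).
Proof.
split=> [|x x_nz]; first by rewrite /Aphi linearZ /= linearD /= trmxK addrC.
have xxT : (x *m x^T)^T = x *m x^T by rewrite trmx_mul trmxK.
rewrite -trace_mx11 -mulmxA mxtrace_mulC -mulmxA mxtrace_sympart_mul_sym //.
have -> : x *m x^T = (x^T)^T *m 1%:M *m x^T by rewrite trmxK mulmx1.
apply: Amx_mxtrace_gram_gt0; first exact: sym_posdef1.
by rewrite -(inj_eq (@trmx_inj _ _ _)) trmxK trmx0.
Qed.

End RiskAversionMatrix.

Section MinimumVariance.
Variables (R : realFieldType) (k : nat) (Sigma : 'M[R]_k).
Hypotheses (Sigma_pd : sym_posdef Sigma) (k_gt0 : (0 < k)%N).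

Let o := ones R k.
Let Si := invmx Sigma.

Lemma invmx_posdef_sym : Si^T = Si.
Proof. by rewrite /Si trmx_inv Sigma_pd.1. Qed.

Lemma mulmx_invmx_posdef : Sigma *m Si = 1%:M.
Proof. by rewrite mulmxV ?posdef_unitmx. Qed.

Lemma oSio_gt0 : 0 < oSio Sigma.
Proof.
have o_nz : o != 0.
  by apply/eqP => /matrixP/(_ (Ordinal k_gt0) 0)/eqP; rewrite !mxE oner_eq0.
have -> : oSio Sigma = ((Si *m o)^T *m Sigma *m (Si *m o)) 0 0.
  rewrite trmx_mul invmx_posdef_sym -!mulmxA (mulmxA Sigma) mulmx_invmx_posdef.
  by rewrite mul1mx mulmxA.
apply: Sigma_pd.2; apply: contra o_nz => /eqP Sio0.
by rewrite -(mul1mx o) -mulmx_invmx_posdef -mulmxA Sio0 mulmx0.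
Qed.

Lemma oSio_mx : o^T *m Si *m o = (oSio Sigma)%:M.
Proof. exact: mx11_scalar. Qed.

Lemma Qmx_sym : (Qmx Sigma)^T = Qmx Sigma.
Proof.
by rewrite /Qmx linearB linearZ /= !trmx_mul trmxK invmx_posdef_sym !mulmxA.
Qed.

Lemma Qmx_ones : Qmx Sigma *m o = 0.
Proof.
rewrite /Qmx mulmxBl -scalemxAl -!mulmxA (mulmxA o^T) oSio_mx mul_mx_scalar.
by rewrite -scalemxAr scalerA mulVf ?gt_eqF ?oSio_gt0 // scale1r subrr.
Qed.

Lemma mulmx_Qmx : Sigma *m Qmx Sigma = 1%:M - (oSio Sigma)^-1 *: (o *m o^T *m Si).
Proof. by rewrite /Qmx mulmxBr -scalemxAr !mulmxA mulmx_invmx_posdef mul1mx. Qed.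

End MinimumVariance.

Section MeanVarianceProblem.
Variables (R : realFieldType) (n k : nat) (alpha beta phi : 'I_n -> R).
Variables (mu : 'cV[R]_k) (Sigma : 'M[R]_k).
Hypotheses (Sigma_pd : sym_posdef Sigma) (k_gt0 : (0 < k)%N).
Hypothesis Aphi_pd : sym_posdef (Aphi alpha beta phi).

Local Notation o := (ones R k).
Local Notation b := (betav beta).
Local Notation A := (Amx alpha beta phi).
Local Notation Ap := (Aphi alpha beta phi).
Local Notation Ws := (Wstar alpha beta phi mu Sigma).

(* [mu b^T - Sigma W Ap] is the gradient of [EU] at [W] and [lambda] the
   multiplier of the budget constraint [W^T o = ones n]. *)
Definition stationary (W : 'M[R]_(k, n)) : Prop :=
  exists lambda : 'rV[R]_n, Sigma *m W *m Ap = mu *m b^T + o *m lambda.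

Lemma EU_stationary_expansion (W W0 : 'M[R]_(k, n)) :
  feasible W -> feasible W0 -> stationary W0 ->
  EU alpha beta phi mu Sigma W = EU alpha beta phi mu Sigma W0
    - 2%:R^-1 * \tr (A *m ((W - W0)^T *m Sigma *m (W - W0))).
Proof.
move=> W_feas W0_feas [lambda W0_stat]; set D := W - W0.
have WE : W = W0 + D by rewrite addrC subrK.
have D_feas : D^T *m o = 0 by rewrite /D linearB /= mulmxBl W_feas W0_feas subrr.
have cross : \tr (A *m D^T *m Sigma *m W0) + \tr (A *m W0^T *m Sigma *m D)
             = 2%:R * (b^T *m D^T *m mu) 0 0.
  have -> : \tr (A *m D^T *m Sigma *m W0) = \tr (D^T *m (Sigma *m W0 *m A)).
    by rewrite -!mulmxA mxtrace_mulC !mulmxA.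
  have -> : \tr (A *m W0^T *m Sigma *m D) = \tr (D^T *m (Sigma *m W0 *m A^T)).
    by rewrite -mxtrace_tr !trmx_mul trmxK Sigma_pd.1 !mulmxA.
  have AAT : A + A^T = 2%:R *: Ap by rewrite /Ap /Aphi scalerA mulfV ?scale1r ?pnatr_eq0.
  rewrite -mxtraceD -!mulmxDr AAT -scalemxAr -scalemxAr mxtraceZ W0_stat mulmxDr.
  by rewrite (mulmxA D^T o) D_feas mul0mx addr0 mulmxA mxtrace_mulC mulmxA trace_mx11.
rewrite /EU WE !mulmxA.
have -> : (b^T *m (W0 + D)^T *m mu) 0 0 =
          (b^T *m W0^T *m mu) 0 0 + (b^T *m D^T *m mu) 0 0.
  by rewrite linearD /= mulmxDr mulmxDl mxE.
have -> : \tr (A *m (W0 + D)^T *m Sigma *m (W0 + D)) = \tr (A *m W0^T *m Sigma *m W0)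
    + (\tr (A *m D^T *m Sigma *m W0) + \tr (A *m W0^T *m Sigma *m D))
    + \tr (A *m D^T *m Sigma *m D).
  by rewrite [(W0 + D)^T]linearD /= !mulmxDr !mulmxDl !mxtraceD; ring.
by rewrite cross; field.
Qed.

Lemma Wstar_feasible : feasible Ws.
Proof.
have s_nz : oSio Sigma != 0 by rewrite gt_eqF ?oSio_gt0.
rewrite /feasible /Wstar linearD /= mulmxDl [(_ *m (_ *m _))^T]trmx_mul.
rewrite [(Qmx Sigma *m mu)^T]trmx_mul Qmx_sym // -!mulmxA Qmx_ones // !mulmx0 addr0.
rewrite trmx_mul trmxK linearZ /= trmx_mul invmx_posdef_sym // -mulmxA -scalemxAl.
by rewrite oSio_mx scale_scalar_mx mulVf // mulmx1.
Qed.

Lemma Wstar_stationary : stationary Ws.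
Proof.
set s := oSio Sigma; set Si := invmx Sigma.
exists (s^-1 *: ((ones R n)^T *m Ap) - s^-1 *: (o^T *m Si *m mu *m b^T)).
rewrite /Wstar -/s -/Si; have := posdef_unitmx Aphi_pd; move: Ap => M M_unit.
rewrite mulmxDr mulmxDl !mulmxA mulmx_Qmx // -(mulmxA _ (invmx M)) mulVmx // mulmx1.
rewrite mulmxBl mul1mx -scalemxAr mulmxA mulmx_invmx_posdef // mul1mx.
by rewrite mulmxBl mulmxBr -!scalemxAl -!scalemxAr !mulmxA addrCA.
Qed.

End MeanVarianceProblem.

Theorem theorem1 (R : realFieldType) (k n : nat) (mu : 'cV[R]_k) (Sigma : 'M[R]_k)
  (alpha beta phi : 'I_n -> R) :
  (2 <= k)%N -> (2 <= n)%N ->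
  sym_posdef Sigma ->
  (forall i, 0 < alpha i) -> injective alpha ->
  (forall i, 0 < beta i) -> \sum_i beta i = 1 ->
  (forall i, 0 < phi i) ->
  sym_posdef (Aphi alpha beta phi) /\
  feasible (Wstar alpha beta phi mu Sigma) /\
  (forall W : 'M[R]_(k, n), feasible W ->
     W <> Wstar alpha beta phi mu Sigma ->
     EU alpha beta phi mu Sigma W < EU alpha beta phi mu Sigma (Wstar alpha beta phi mu Sigma)).
Proof.
move=> k_ge2 _ Sigma_pd alpha_gt0 _ beta_gt0 _ phi_gt0.
have k_gt0 : (0 < k)%N by apply: leq_trans k_ge2.
have Aphi_pd := Aphi_sym_posdef alpha_gt0 beta_gt0 phi_gt0.
have Wstar_feas := Wstar_feasible alpha beta phi mu Sigma_pd k_gt0.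
split=> //; split=> // W W_feas W_neq.
have D_nz : W - Wstar alpha beta phi mu Sigma != 0 by rewrite subr_eq0; apply/eqP.
have := Amx_mxtrace_gram_gt0 alpha_gt0 beta_gt0 phi_gt0 Sigma_pd D_nz.
rewrite (EU_stationary_expansion Sigma_pd W_feas Wstar_feas).
  by move=> t_gt0; lra.
exact: Wstar_stationary.
Qed.
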